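(* Let $D$ be a Dirac operator for a finite complex spectral triple over $\mathcal A$, let $\xi:=\sum_{i\neq j}P_i\,dP_j\in\Omega^1(\mathcal A)$ and $\hat\xi:=\pi(\xi)$. Suppose $\hat\xi^{\,2}=\sum_i\pi(P_i)\hat\xi^{\,2}\pi(P_i)$. Then in $\Omega^2(\mathcal A)$ one has $\sum_iP_i\xi\xi P_i=\xi\xi$, $d\xi=2\xi\xi$, and for every $\omega\in\Omega^1(\mathcal A)$ $$d\omega=\xi\omega+\omega\xi .$$ Consequently the curvature $F(H):=dH+HH$ of the one-form $H=-2\xi$ vanishes in $\Omega^2(\mathcal A)$.
   Context: Let $\mathcal A=\bigoplus_{i=1}^k M_{n_i}(\mathbb C)$ ($n_i\ge 1$), with involution $a\mapsto a^*$ given by blockwise conjugate transpose. A finite complex spectral triple over $\mathcal A$ consists of: a finite-dimensional complex Hilbert space $\mathcal H$; a faithful $*$-representation $\pi:\mathcal A\to B(\mathcal H)$; an antilinear isometry $J$ of $\mathcal H$ with $J^2=1$ such that $\pi^0(a):=J\pi(a)^*J$ defines a representation of the opposite algebra $\mathcal A^0$ and $[\pi^0(a),\pi(b)]=0$ for all $a,b\in\mathcal A$; and a grading $\gamma\in B(\mathcal H)$ with $\gamma^*=\gamma$, $\gamma^2=1$, $J\gamma=\gamma J$, $\gamma\pi(a)=\pi(a)\gamma$ for all $a$, and $\gamma=\sum_m\pi(x_m)\pi^0(y_m)$ for finitely many $x_m,y_m\in\mathcal A$. Let $P_i\in\mathcal A$ be the element with the identity matrix in the $i$-th block and zeros elsewhere.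 A Dirac operator is a self-adjoint $D\in B(\mathcal H)$ with $DJ=JD$, $D\gamma=-\gamma D$ and $[[D,\pi(a)],\pi^0(b)]=0$ for all $a,b$. Let $\Omega_u\mathcal A$ be the universal differential graded algebra of $\mathcal A$; $\pi$ extends to it by $\pi(a_0\,da_1\cdots da_n)=\pi(a_0)[D,\pi(a_1)]\cdots[D,\pi(a_n)]$. The differential algebra of the spectral triple is $\Omega(\mathcal A)=\Omega_u\mathcal A/(\ker\pi+d\ker\pi)$, i.e. $\Omega^n(\mathcal A)=\Omega^n_u\mathcal A/(\Omega^n_u\mathcal A\cap(\ker\pi+d\ker\pi))$, with the induced product and differential $d$. *)

From HB Require Import structures.
From mathcomp Require Import all_boot all_algebra.
Set Implicit Arguments. Unset Strict Implicit. Unset Printing Implicit Defensive.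
Import GRing.Theory Num.Theory.
Local Open Scope ring_scope.

Section Mx.
Variable C : numClosedFieldType.

Definition conjmx m p (A : 'M[C]_(m, p)) : 'M[C]_(m, p) := map_mx (fun z => z^*) A.
Definition adjmx m p (A : 'M[C]_(m, p)) : 'M[C]_(p, m) := (conjmx A)^T.
Definition comm N (X Y : 'M[C]_N) : 'M[C]_N := X *m Y - Y *m X.

(* An antilinear map on H = C^N is x |-> Jm *m conj(x); Jop Jm is that map. *)
Definition Jop N (Jm : 'M[C]_N) (x : 'cV[C]_N) : 'cV[C]_N := Jm *m conjmx x.
(* the matrix of the (linear) operator  x |-> J (B (J x))  *)
Definition Jconj N (Jm : 'M[C]_N) (B : 'M[C]_N) : 'M[C]_N :=
  Jm *m conjmx B *m conjmx Jm.
End Mx.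

Section Alg.
Variables (C : numClosedFieldType) (k : nat) (n : 'I_k -> nat).

Definition alg := forall i : 'I_k, 'M[C]_(n i).
Definition aadd (a b : alg) : alg := fun i => a i + b i.
Definition aopp (a : alg) : alg := fun i => - a i.
Definition ascale (c : C) (a : alg) : alg := fun i => c *: a i.
Definition amul (a b : alg) : alg := fun i => a i *m b i.
Definition astar (a : alg) : alg := fun i => adjmx (a i).
Definition aone : alg := fun i => 1%:M.
Definition Pblk (j : 'I_k) : alg := fun i => if i == j then 1%:M else 0.
End Alg.

Definition pi0_of (C : numClosedFieldType) k (n : 'I_k -> nat) N
  (pi : alg C n -> 'M[C]_N) (Jm : 'M[C]_N) (a : alg C n) : 'M[C]_N :=
  Jconj Jm (adjmx (pi a)).

Record fin_spectral_triple (C : numClosedFieldType) k (n : 'I_k -> nat) := FST {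
  fst_N : nat;
  fst_pi : alg C n -> 'M[C]_fst_N;
  fst_J : 'M[C]_fst_N;
  fst_gamma : 'M[C]_fst_N;
  fst_pi_add : forall a b, fst_pi (aadd a b) = fst_pi a + fst_pi b;
  fst_pi_scale : forall c a, fst_pi (ascale c a) = c *: fst_pi a;
  fst_pi_mul : forall a b, fst_pi (amul a b) = fst_pi a *m fst_pi b;
  fst_pi_star : forall a, fst_pi (astar a) = adjmx (fst_pi a);
  fst_pi_inj : injective fst_pi;
  (* J antilinear (built in) isometry with J^2 = 1 *)
  fst_J_isom : forall x : 'cV[C]_fst_N,
      adjmx (Jop fst_J x) *m Jop fst_J x = adjmx x *m x;
  fst_J_invol : forall x : 'cV[C]_fst_N, Jop fst_J (Jop fst_J x) = x;
  fst_pi0_add : forall a b, pi0_of fst_pi fst_J (aadd a b)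
      = pi0_of fst_pi fst_J a + pi0_of fst_pi fst_J b;
  fst_pi0_scale : forall c a, pi0_of fst_pi fst_J (ascale c a)
      = c *: pi0_of fst_pi fst_J a;
  fst_pi0_mul : forall a b, pi0_of fst_pi fst_J (amul a b)
      = pi0_of fst_pi fst_J b *m pi0_of fst_pi fst_J a;
  fst_pi0_comm : forall a b,
      pi0_of fst_pi fst_J a *m fst_pi b = fst_pi b *m pi0_of fst_pi fst_J a;
  fst_gamma_sa : adjmx fst_gamma = fst_gamma;
  fst_gamma_sq : fst_gamma *m fst_gamma = 1%:M;
  fst_gamma_J : forall x, Jop fst_J (fst_gamma *m x) = fst_gamma *m Jop fst_J x;
  fst_gamma_pi : forall a, fst_gamma *m fst_pi a = fst_pi a *m fst_gamma;
  fst_gamma_gen : exists s : seq (alg C n * alg C n),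
      fst_gamma = \sum_(p <- s) fst_pi p.1 *m pi0_of fst_pi fst_J p.2
}.

Section Forms.
Variables (C : numClosedFieldType) (k : nat) (n : 'I_k -> nat).
Variable S : fin_spectral_triple C n.
Let N := fst_N S.
Let pi := fst_pi S.
Let J := fst_J S.
Let g := fst_gamma S.
Definition pi0 := pi0_of pi J.

Definition is_dirac (D : 'M[C]_N) : Prop :=
  [/\ adjmx D = D,
      forall x, Jop J (D *m x) = D *m Jop J x,
      D *m g = - (g *m D) &
      forall a b, comm (comm D (pi a)) (pi0 b) = 0].

(* Universal forms, represented by finite formal sums of generators:    *)
(* a 1-form  sum a0 da1  is a list of pairs (a0,a1);                    *)
(* a 2-form  sum a0 da1 da2 is a list of triples ((a0,a1),a2).          *)
(* Sums are concatenations.                                             *)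
Definition uform1 := seq (alg C n * alg C n).
Definition uform2 := seq (alg C n * alg C n * alg C n).

Definition neg2 (w : uform2) : uform2 := [seq ((aopp p.1.1, p.1.2), p.2) | p <- w].

Definition d1 (w : uform1) : uform2 := [seq ((@aone C k n, p.1), p.2) | p <- w].

(* (a0 da1)(b0 db1) = a0 d(a1 b0) db1 - a0 a1 db0 db1 *)
Definition mul11 (u v : uform1) : uform2 :=
  flatten [seq [:: ((p.1, amul p.2 q.1), q.2); ((aopp (amul p.1 p.2), q.1), q.2)]
          | p <- u, q <- v].

Definition lmul2 (a : alg C n) (w : uform2) : uform2 :=
  [seq ((amul a p.1.1, p.1.2), p.2) | p <- w].

(* (a0 da1 da2) b = a0 da1 d(a2 b) - a0 d(a1 a2) db + a0 a1 da2 db *)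
Definition rmul2 (w : uform2) (b : alg C n) : uform2 :=
  flatten [seq [:: ((p.1.1, p.1.2), amul p.2 b);
                   ((aopp p.1.1, amul p.1.2 p.2), b);
                   ((amul p.1.1 p.1.2, p.2), b)] | p <- w].

Section WithD.
Variable D : 'M[C]_N.

Definition piD1 (w : uform1) : 'M[C]_N :=
  \sum_(p <- w) pi p.1 *m comm D (pi p.2).
Definition piD2 (w : uform2) : 'M[C]_N :=
  \sum_(p <- w) pi p.1.1 *m comm D (pi p.1.2) *m comm D (pi p.2).

(* Equality in Omega^2(A) = Omega^2_u / (ker pi^2 + d ker pi^1):        *)
(* u - v - d k1 lies in ker pi for some k1 in ker pi^1.                 *)
Definition eqOmega2 (u v : uform2) : Prop :=
  exists k1 : uform1, piD1 k1 = 0 /\ piD2 (u ++ neg2 (v ++ d1 k1)) = 0.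
End WithD.

Definition xi : uform1 :=
  [seq (@Pblk C k n p.1, @Pblk C k n p.2) |
     p <- [seq (i, j) | i <- enum 'I_k, j <- enum 'I_k] & p.1 != p.2].

Definition scale1 (c : C) (w : uform1) : uform1 := [seq (ascale c p.1, p.2) | p <- w].

Definition curvature (H : uform1) : uform2 := d1 H ++ mul11 H H.
End Forms.

(* Let xih = pi(xi) = sum_(i != j) pi(P_i) [D, pi(P_j)].  Since the pi(P_i) sum
   to 1, xih = D - sum_i pi(P_i) D pi(P_i) is the off-diagonal part of D.  The
   diagonal part commutes with pi(A): by the order-one condition it is enough
   that each corner q D q, q = pi(P_i) pi0(P_j), vanishes, and it does because
   the grading, which lies in pi(A) pi0(A), is a scalar on q (a matrix-unit
   argument, using n_i >= 1) while D anticommutes with it.  Hence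
   [D, pi a] = [xih, pi a] for every a, and each identity in Omega^2 becomes
   a matrix identity in xih; the hypothesis enters through
   sum_(i != j) [D, pi P_i] [D, pi P_j] = xih^2 + sum_i pi(P_i) xih^2 pi(P_i)
   = 2 xih^2.  For d w = xi w + w xi the kernel of pi is needed: the 1-form
   xi a - a xi - da lies in it and its differential is represented by
   [xih^2, pi a]. *)

From Pilot Require Import Defs.
From HB Require Import structures.
From mathcomp Require Import all_boot all_algebra.
From Stdlib Require Import FunctionalExtensionality.
Set Implicit Arguments.
Unset Strict Implicit.
Unset Printing Implicit Defensive.
Import GRing.Theory Num.Theory.
Local Open Scope ring_scope.

Section RingMatrices.
Variables (R : comNzRingType) (m : nat).

Lemma mx_ext (M1 M2 : 'M[R]_m) :
  (forall x : 'cV_m, M1 *m x = M2 *m x) -> M1 = M2.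
Proof.
move=> eqM; apply/matrixP => i j.
have := congr1 (fun v : 'cV_m => v i 0) (eqM (delta_mx j 0)).
by rewrite -!colE !mxE.
Qed.

Lemma mulmx_corner (e f X Y : 'M[R]_m) :
  f *m X = X *m f -> Y *m e = e *m Y -> e *m f = f *m e ->
  (e *m f) *m (X *m Y) *m (e *m f) = (e *m X *m e) *m (f *m Y *m f).
Proof.
move=> fX Ye ef.
rewrite !mulmxA -(mulmxA e f X) fX mulmxA -(mulmxA _ Y e) Ye mulmxA.
by rewrite -(mulmxA (e *m X) f e) -ef !mulmxA.
Qed.

Lemma mxunits_scalar (I : finType) (u : I -> I -> 'M[R]_m) (G : 'M[R]_m)
    (o : I) (c : R) :
  (forall a b d, u a b *m u b d = u a d) ->
  (forall a b, G *m u a b = u a b *m G) ->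
  u o o *m G *m u o o = c *: u o o ->
  G *m \sum_a u a a = c *: \sum_a u a a.
Proof.
move=> uM Gu uGu; rewrite mulmx_sumr scaler_sumr; apply: eq_bigr => a _.
have Guoo : G *m u o o = c *: u o o by rewrite -{1}(uM o o o) mulmxA Gu.
have -> : u a a = u a o *m u o o *m u o a by rewrite !uM.
by rewrite !mulmxA Gu -(mulmxA (u a o)) Guoo -scalemxAr -scalemxAl.
Qed.

Lemma mxunits_tensor (I1 I2 : finType) (e : I1 -> I1 -> 'M[R]_m)
    (f : I2 -> I2 -> 'M[R]_m) :
  (forall a b d, e a b *m e b d = e a d) ->
  (forall a b d, f a b *m f b d = f a d) ->
  (forall a b c d, e a b *m f c d = f c d *m e a b) ->
  forall a b d : I1 * I2,
    (e a.1 b.1 *m f a.2 b.2) *m (e b.1 d.1 *m f b.2 d.2)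
    = e a.1 d.1 *m f a.2 d.2.
Proof.
move=> eM fM ef a b d.
by rewrite mulmxA -(mulmxA _ (f _ _)) -ef !mulmxA eM -mulmxA fM.
Qed.

Lemma sum_idem_compress (I : finType) (q : I -> 'M[R]_m) (T : 'M[R]_m) :
  \sum_l q l = 1%:M -> (forall l, q l *m q l = q l) ->
  (forall l, T *m q l = q l *m T) ->
  T = \sum_l q l *m T *m q l.
Proof.
move=> q1 qq Tq; rewrite -[LHS]mulmx1 -q1 mulmx_sumr.
by apply: eq_bigr => l _; rewrite -{1}qq mulmxA Tq.
Qed.

End RingMatrices.

Lemma odd_compress_eigen0 (F : numFieldType) m (g D q : 'M[F]_m) (c : F) :
  g *m g = 1%:M -> D *m g = - (g *m D) -> g *m q = q *m g ->
  g *m q = c *: q -> q *m D *m q = 0.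
Proof.
move=> gg Dg gq gqc.
have qg : q *m g = c *: q by rewrite -gq.
have qc2 : q = (c * c) *: q.
  by rewrite -scalerA -gqc scalemxAr -gqc mulmxA gg mul1mx.
have Yg : q *m D *m q *m g = c *: (q *m D *m q).
  by rewrite -mulmxA qg -scalemxAr.
have cYN : c *: (q *m D *m q) = - (c *: (q *m D *m q)).
  rewrite -{1}Yg -mulmxA -gq mulmxA -(mulmxA q D g) Dg mulmxN mulNmx mulmxA qg.
  by rewrite -!scalemxAl.
have cY : c *: (q *m D *m q) = 0.
  have : (2%:R : F) *: (c *: (q *m D *m q)) = 0.
    by rewrite scaler_nat mulr2n {1}cYN addNr.
  by move/eqP; rewrite scalemx_eq0 pnatr_eq0 => /eqP.
by rewrite {1}qc2 -!scalemxAl -scalerA cY scaler0.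
Qed.

Section Conjugation.
Variable C : numClosedFieldType.

Lemma conjmxK m1 m2 (M : 'M[C]_(m1, m2)) : Defs.conjmx (Defs.conjmx M) = M.
Proof. by apply/matrixP => i j; rewrite !mxE conjCK. Qed.

Lemma conjmxM m1 m2 m3 (M1 : 'M[C]_(m1, m2)) (M2 : 'M[C]_(m2, m3)) :
  Defs.conjmx (M1 *m M2) = Defs.conjmx M1 *m Defs.conjmx M2.
Proof. exact: map_mxM. Qed.

Lemma conjmx1 m : Defs.conjmx (1%:M : 'M[C]_m) = 1%:M.
Proof. exact: map_mx1. Qed.

End Conjugation.

Section Commutators.
Variables (C : numClosedFieldType) (m : nat).
Implicit Types X Y Z D p q x : 'M[C]_m.

Lemma commBl X Y Z : comm (X - Y) Z = comm X Z - comm Y Z.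
Proof. by rewrite /comm mulmxBl mulmxBr !opprD !opprK addrACA. Qed.

Lemma comm_sumr (I : finType) X (Y : I -> 'M[C]_m) :
  comm X (\sum_i Y i) = \sum_i comm X (Y i).
Proof. by rewrite /comm mulmx_sumr mulmx_suml sumrB. Qed.

Lemma comm_suml (I : finType) (X : I -> 'M[C]_m) Y :
  comm (\sum_i X i) Y = \sum_i comm (X i) Y.
Proof. by rewrite /comm mulmx_sumr mulmx_suml sumrB. Qed.

Lemma commx1 X : comm X 1%:M = 0.
Proof. by rewrite /comm mulmx1 mul1mx subrr. Qed.

Lemma commMl X Y Z : comm (X *m Y) Z = X *m comm Y Z + comm X Z *m Y.
Proof.
by rewrite /comm mulmxBr mulmxBl !mulmxA addrA subrK.
Qed.

Lemma comm_compress p D X :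
  p *m X = X *m p -> comm (p *m D *m p) X = p *m comm D X *m p.
Proof.
move=> pX; rewrite /comm mulmxBr mulmxBl !mulmxA.
by rewrite -(mulmxA (p *m D) p X) pX mulmxA -pX.
Qed.

Lemma compress_comm0 q D X :
  q *m X = X *m q -> q *m D *m q = 0 -> q *m comm D X *m q = 0.
Proof.
by move=> qX qDq; rewrite -comm_compress // /comm qDq mul0mx mulmx0 subrr.
Qed.

Section IdempotentCompression.
Variables (p x : 'M[C]_m).
Hypotheses (pp : p *m p = p) (pxp : p *m x *m p = 0).

Lemma comm_idemMl : comm x p *m p = x *m p.
Proof.
by rewrite /comm mulmxBl -!mulmxA pp !mulmxA pxp subr0.
Qed.

Lemma comm_idemMr : p *m comm x p = - (p *m x).
Proof. by rewrite /comm mulmxBr !mulmxA pp pxp sub0r. Qed.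

Lemma comm_idem_sqr :
  comm x p *m comm x p = - (x *m p *m x) - p *m (x *m x) *m p.
Proof.
have xpxp : x *m p *m x *m p = 0 by rewrite -!mulmxA (mulmxA p x p) pxp mulmx0.
rewrite /comm mulmxBl !mulmxBr !mulmxA xpxp pxp mul0mx subr0 -(mulmxA x p p) pp.
by rewrite sub0r.
Qed.

End IdempotentCompression.

Lemma comm_mulr_comm X Y Z :
  comm X Y *m comm X Z = X *m (Y *m comm X Z) + Y *m comm X Z *m X
                         - Y *m comm (X *m X) Z.
Proof.
rewrite /comm !(mulmxBl, mulmxBr) !mulmxA -[RHS]addrA.
by rewrite [in RHS](addrC (Y *m X *m X *m Z)) addrKA opprB.
Qed.

Lemma comm_sqr_twice X Y :
  (X *m X + X *m X) *m Y + - X *m comm X Y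
  + (- comm X Y *m X + - Y *m (X *m X + X *m X)) = comm (X *m X) Y.
Proof.
rewrite !mulNmx [- (_ *m X) + _]addrC addrACA -opprD -commMl.
by rewrite mulmxDl mulmxDr opprD addrACA addrK.
Qed.

End Commutators.

Section BlockAlgebra.
Variables (C : numClosedFieldType) (k : nat) (n : 'I_k -> nat).
Local Notation A := (alg C n).
Local Notation P := (@Pblk C k n).

Lemma alg_ext (a b : A) : (forall i, a i = b i) -> a = b.
Proof. exact: functional_extensionality_dep. Qed.

Lemma amulA (a b c : A) : amul a (amul b c) = amul (amul a b) c.
Proof. by apply: alg_ext => i; rewrite /amul mulmxA. Qed.

Lemma amul_P i j : amul (P i) (P j) = if i == j then P i else ascale 0 (P i).
Proof.
case: eqP => [<-|/eqP/negbTE nij]; apply: alg_ext => i0; rewrite /amul /Pblk.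
  by case: (i0 == i); rewrite ?mulmx1 ?mul0mx.
rewrite /ascale scale0r; case: (i0 =P i) => [->|_]; last by rewrite mul0mx.
by rewrite nij mulmx0.
Qed.

Lemma amul_PC i a : amul (P i) a = amul a (P i).
Proof.
apply: alg_ext => i0; rewrite /amul /Pblk.
by case: (i0 == i); rewrite ?mul1mx ?mulmx1 ?mul0mx ?mulmx0.
Qed.

Lemma sum_P : (fun i0 => \sum_j P j i0) = aone C n.
Proof.
apply: alg_ext => i0; rewrite /aone /Pblk (bigD1 i0) //= eqxx big1 ?addr0 //.
by move=> j /negbTE; rewrite eq_sym => ->.
Qed.

Section AdditiveMap.
Variables (m : nat) (f : A -> 'M[C]_m).
Hypotheses (fD : forall a b, f (aadd a b) = f a + f b)
  (fZ : forall c a, f (ascale c a) = c *: f a).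

Lemma amap0 : f (fun i => 0) = 0.
Proof.
have -> : (fun i => 0) = ascale 0 (fun i => 0) :> A.
  by apply: alg_ext => i; rewrite /ascale scale0r.
by rewrite fZ scale0r.
Qed.

Lemma amap_sum (I : Type) (r : seq I) (F : I -> A) :
  f (fun i0 => \sum_(j <- r) F j i0) = \sum_(j <- r) f (F j).
Proof.
elim: r => [|x r IH].
  by rewrite big_nil -amap0; congr f; apply: alg_ext => i; rewrite big_nil.
rewrite big_cons -IH -fD; congr f; apply: alg_ext => i.
by rewrite big_cons.
Qed.

Lemma amapN a : f (aopp a) = - f a.
Proof.
have -> : aopp a = ascale (-1) a.
  by apply: alg_ext => i; rewrite /ascale /aopp scaleN1r.
by rewrite fZ scaleN1r.
Qed.

End AdditiveMap.

Lemma sum_xi (V : zmodType) (F : A * A -> V) :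
  \sum_(q <- xi C n) F q = \sum_i \sum_j F (P i, P j) - \sum_i F (P i, P i).
Proof.
rewrite /xi big_map big_filter big_mkcond big_allpairs /= big_enum -sumrB /=.
apply: eq_bigr => i _; rewrite big_enum /= (bigD1 i) //= [in RHS](bigD1 i) //=.
rewrite eqxx add0r addrAC subrr add0r.
by apply: eq_bigr => j; rewrite eq_sym => ->.
Qed.

Lemma sum_xi_mul m (F G : A -> 'M[C]_m) :
  \sum_(q <- xi C n) F q.1 *m G q.2
  = (\sum_i F (P i)) *m (\sum_j G (P j)) - \sum_i F (P i) *m G (P i).
Proof.
rewrite sum_xi mulmx_suml; congr (_ - _); apply: eq_bigr => i _.
by rewrite mulmx_sumr.
Qed.

Definition embblk (i : 'I_k) (M : 'M[C]_(n i)) : A :=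
  fun i0 => if i =P i0 is ReflectT e then castmx (congr1 n e, congr1 n e) M else 0.
Arguments embblk : clear implicits.

Lemma embblk_id i M : embblk i M i = M.
Proof. by rewrite /embblk; case: (i =P i) => // e; rewrite castmx_id. Qed.

Lemma embblk_other i M i0 : i != i0 -> embblk i M i0 = 0.
Proof. by rewrite /embblk; case: (i =P i0). Qed.

Lemma embblkE i (M : 'M[C]_(n i)) (f : forall i0, 'M[C]_(n i0)) :
  f i = M -> (forall i0, i != i0 -> f i0 = 0) -> f = embblk i M.
Proof.
move=> fi f0; apply: alg_ext => i0; case: (i =P i0) => [<-|/eqP ne].
  by rewrite embblk_id.
by rewrite embblk_other // f0.
Qed.

Definition munit i (r s : 'I_(n i)) : A := embblk i (delta_mx r s).
Arguments munit : clear implicits.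

Lemma munit_mul i r s t : amul (munit i r s) (munit i s t) = munit i r t.
Proof.
apply: embblkE => [|i0 ne]; rewrite /amul /munit ?embblk_id ?mul_delta_mx //.
by rewrite embblk_other // mul0mx.
Qed.

Lemma Pblk_embblk i : P i = embblk i 1%:M.
Proof.
by apply: embblkE => [|i0 ne]; rewrite /Pblk ?eqxx // eq_sym (negbTE ne).
Qed.

Lemma sum_munit i : (fun i0 => \sum_r munit i r r i0) = P i.
Proof.
rewrite Pblk_embblk; apply: embblkE => [|i0 ne]; rewrite /munit.
  by under eq_bigr do rewrite embblk_id; rewrite mx1_sum_delta.
by rewrite big1 // => r _; rewrite embblk_other.
Qed.

Lemma embblkZ i c M : ascale c (embblk i M) = embblk i (c *: M).
Proof.
apply: embblkE => [|i0 ne]; rewrite /ascale ?embblk_id //.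
by rewrite embblk_other // scaler0.
Qed.

Lemma munit_sandwich i (o : 'I_(n i)) a :
  amul (amul (munit i o o) a) (munit i o o) = ascale (a i o o) (munit i o o).
Proof.
rewrite /munit embblkZ; apply: embblkE => [|i0 ne]; rewrite /amul; last first.
  by rewrite !embblk_other // !mul0mx.
rewrite !embblk_id; apply/matrixP => r s; rewrite !mxE (bigD1 o) //= big1.
  rewrite !mxE (bigD1 o) //= big1 => [|t nt]; last first.
    by rewrite !mxE (negbTE nt) andbF mul0r.
  rewrite !mxE !eqxx andbT /= !addr0.
  by case: (r == o); case: (s == o); rewrite /= ?mulr1 ?mul1r ?mulr0 ?mul0r.
by move=> t nt; rewrite [delta_mx _ _ t s]mxE (negbTE nt) mulr0.
Qed.

Definition lmul1 (a : A) (w : uform1 C n) : uform1 C n :=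
  [seq (amul a q.1, q.2) | q <- w].

(* The universal 1-form [xi a - a xi - da]: expanding
   [(q1 dq2) a = q1 d(q2 a) - q1 q2 da], the terms [q1 q2 da] add up to zero
   since [P i P j = 0] for [i != j]. *)
Definition xi_bracket (a : A) : uform1 C n :=
  [seq (q.1, amul q.2 a) | q <- xi C n] ++ lmul1 (aopp a) (xi C n)
  ++ [:: (aopp (aone C n), a)].

End BlockAlgebra.

Arguments embblk {C k n} i M.
Arguments munit {C k n} i r s.

Section Representation.
Variables (C : numClosedFieldType) (k : nat) (n : 'I_k -> nat).
Variable S : fin_spectral_triple C n.
Local Notation N := (fst_N S).
Local Notation pi := (fst_pi S).
Local Notation J := (fst_J S).
Local Notation g := (fst_gamma S).
Local Notation P := (@Pblk C k n).
Local Notation A := (alg C n).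

(* [pi0 S] unfolds to a product of matrices, which associativity rewrites
   would break open; we work with a sealed copy. *)
Definition rep0 : A -> 'M[C]_N := locked (pi0 S).
Local Notation pio := rep0.

Lemma rep0E a : pio a = pi0 S a.
Proof. by rewrite /rep0 -lock. Qed.

Lemma pi0D a b : pio (aadd a b) = pio a + pio b.
Proof. by rewrite !rep0E; exact: fst_pi0_add. Qed.

Lemma pi0Z c a : pio (ascale c a) = c *: pio a.
Proof. by rewrite !rep0E; exact: fst_pi0_scale. Qed.

Lemma pi0M a b : pio (amul a b) = pio b *m pio a.
Proof. by rewrite !rep0E; exact: fst_pi0_mul. Qed.

Lemma pi_pi0 a b : pi a *m pio b = pio b *m pi a.
Proof. by rewrite rep0E fst_pi0_comm. Qed.

Lemma pi_sum I (r : seq I) (F : I -> A) :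
  pi (fun i0 => \sum_(j <- r) F j i0) = \sum_(j <- r) pi (F j).
Proof. exact: (amap_sum (fst_pi_add S) (fst_pi_scale S)). Qed.

Lemma pi0_sum I (r : seq I) (F : I -> A) :
  pio (fun i0 => \sum_(j <- r) F j i0) = \sum_(j <- r) pio (F j).
Proof. exact: (amap_sum pi0D pi0Z). Qed.

Lemma piN a : pi (aopp a) = - pi a.
Proof. exact: (amapN (fst_pi_scale S)). Qed.

Lemma pi_P_mul i j : pi (P i) *m pi (P j) = if i == j then pi (P i) else 0.
Proof.
by rewrite -fst_pi_mul amul_P; case: (i == j); rewrite ?fst_pi_scale ?scale0r.
Qed.

Lemma pi0_P_mul i j : pio (P i) *m pio (P j) = if i == j then pio (P i) else 0.
Proof.
rewrite -pi0M amul_P eq_sym; case: eqP => [->|_] //.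
by rewrite pi0Z scale0r.
Qed.

Lemma pi_P_central i a : pi (P i) *m pi a = pi a *m pi (P i).
Proof. by rewrite -!fst_pi_mul amul_PC. Qed.

(* [pi 1] is an idempotent acting as the identity on [pi A]; it fixes the
   grading, which lies in [pi A pi0 A], and [gamma ^ 2 = 1] forces it to be 1. *)
Lemma pi1 : pi (aone C n) = 1%:M.
Proof.
have e_pi a : pi (aone C n) *m pi a = pi a.
  by rewrite -fst_pi_mul; congr pi; apply: alg_ext => i; rewrite /amul mul1mx.
have e_g : pi (aone C n) *m g = g.
  case: (fst_gamma_gen S) => s ->.
  by rewrite mulmx_sumr; apply: eq_bigr => p _; rewrite mulmxA e_pi.
by rewrite -(fst_gamma_sq S) -{1}e_g -mulmxA fst_gamma_sq mulmx1.
Qed.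

Lemma J_conjJ : J *m Defs.conjmx J = 1%:M.
Proof.
apply: mx_ext => x; rewrite mul1mx -{2}(fst_J_invol x).
by rewrite /Jop conjmxM conjmxK mulmxA.
Qed.

Lemma pi01 : pio (aone C n) = 1%:M.
Proof.
rewrite rep0E /pi0 /pi0_of pi1 /Jconj /adjmx conjmx1 trmx1 conjmx1 mulmx1.
exact: J_conjJ.
Qed.

Lemma sum_pi_P : \sum_i pi (P i) = 1%:M.
Proof. by rewrite -pi_sum sum_P pi1. Qed.

Lemma sum_pi0_P : \sum_i pio (P i) = 1%:M.
Proof. by rewrite -pi0_sum sum_P pi01. Qed.

Lemma g_pi0 a : g *m pio a = pio a *m g.
Proof.
have gJ : J *m Defs.conjmx g = g *m J.
  apply: mx_ext => y; have := fst_gamma_J (Defs.conjmx y).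
  by rewrite /Jop conjmxM conjmxK !mulmxA.
have cJg : Defs.conjmx J *m g = Defs.conjmx g *m Defs.conjmx J.
  by rewrite -[g in LHS]conjmxK -conjmxM gJ conjmxM.
rewrite rep0E /pi0 /pi0_of /Jconj -fst_pi_star !mulmxA -gJ -(mulmxA J) -conjmxM.
by rewrite fst_gamma_pi conjmxM -!mulmxA cJg.
Qed.

Hypothesis n_gt0 : forall i, (0 < n i)%N.

Lemma gamma_scalar_block i j :
  exists c, g *m (pi (P i) *m pio (P j)) = c *: (pi (P i) *m pio (P j)).
Proof.
pose o := Ordinal (n_gt0 i); pose o' := Ordinal (n_gt0 j).
have [s gE] : exists s : seq (A * A), g = \sum_(p <- s) pi p.1 *m pio p.2.
  case: (fst_gamma_gen S) => s ->; exists s.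
  by apply: eq_bigr => p _; rewrite rep0E.
exists (\sum_(p <- s) p.1 i o o * p.2 j o' o').
pose e r t := pi (munit i r t); pose f r t := pio (munit j t r).
have eM r t u : e r t *m e t u = e r u by rewrite -fst_pi_mul munit_mul.
have fM r t u : f r t *m f t u = f r u by rewrite -pi0M munit_mul.
have ef r t u v : e r t *m f u v = f u v *m e r t by exact: pi_pi0.
have -> : pi (P i) *m pio (P j) = \sum_p e p.1 p.1 *m f p.2 p.2.
  rewrite -[P i]sum_munit -[P j]sum_munit pi_sum pi0_sum mulmx_suml.
  by under eq_bigr do rewrite mulmx_sumr; exact: pair_bigA.
apply: (mxunits_scalar (o := (o, o')) (mxunits_tensor eM fM ef)) => [p q|] /=.
  by rewrite /e /f mulmxA fst_gamma_pi -(mulmxA _ g) g_pi0 mulmxA.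
have corner x y : (e o o *m f o' o') *m (pi x *m pio y) *m (e o o *m f o' o')
                   = (x i o o * y j o' o') *: (e o o *m f o' o').
  rewrite mulmx_corner; try by rewrite pi_pi0.
  rewrite /e /f -!fst_pi_mul munit_sandwich fst_pi_scale.
  rewrite -!pi0M amulA munit_sandwich pi0Z.
  by rewrite -scalemxAl -scalemxAr scalerA.
rewrite gE mulmx_sumr mulmx_suml scaler_suml.
by apply: eq_bigr => p _; rewrite corner.
Qed.

End Representation.

Section Dirac.
Variables (C : numClosedFieldType) (k : nat) (n : 'I_k -> nat).
Variable S : fin_spectral_triple C n.
Hypothesis n_gt0 : forall i, (0 < n i)%N.
Variable D : 'M[C]_(fst_N S).
Hypothesis hD : is_dirac D.
Local Notation pi := (fst_pi S).
Local Notation pio := (rep0 S).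
Local Notation g := (fst_gamma S).
Local Notation P := (@Pblk C k n).
Local Notation dpi a := (comm D (pi a)).

Lemma order_one a b : dpi a *m pio b = pio b *m dpi a.
Proof. by rewrite rep0E; case: hD => _ _ _ /(_ a b) /subr0_eq. Qed.

(* The block [pi (P i) pi0 (P j)] is an eigenspace of the grading, which
   anticommutes with [D]. *)
Lemma compress_D0 i j :
  (pi (P i) *m pio (P j)) *m D *m (pi (P i) *m pio (P j)) = 0.
Proof.
have [c gq] := gamma_scalar_block S n_gt0 i j.
apply: (odd_compress_eigen0 (fst_gamma_sq S) _ _ gq); first by case: hD.
by rewrite mulmxA fst_gamma_pi -(mulmxA _ g) g_pi0 mulmxA.
Qed.

Definition Ddiag := \sum_i pi (P i) *m D *m pi (P i).

(* By the order-one condition, [pi (P i) [D, pi a] pi (P i)] commutes with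
   every [pi0 (P l)], so it splits into the corners [pi (P i) pi0 (P l)],
   each of which kills [D]. *)
Lemma Ddiag_comm a : comm Ddiag (pi a) = 0.
Proof.
rewrite /Ddiag comm_suml; apply: big1 => i _.
rewrite (comm_compress D (pi_P_central S i a)).
rewrite (sum_idem_compress (q := fun l => pio (P l))
                           (T := pi (P i) *m dpi a *m pi (P i))) => [|||l].
- apply: big1 => l _.
  have -> : pio (P l) *m (pi (P i) *m dpi a *m pi (P i)) *m pio (P l)
          = (pi (P i) *m pio (P l)) *m dpi a *m (pi (P i) *m pio (P l)).
    by rewrite !mulmxA -pi_pi0.
  apply: compress_comm0; last exact: compress_D0.
  by rewrite -mulmxA -pi_pi0 !mulmxA pi_P_central.
- exact: sum_pi0_P.
- by move=> l; rewrite pi0_P_mul eqxx.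
- rewrite !mulmxA -(mulmxA _ (pi (P i)) (pio (P l))) pi_pi0 mulmxA.
  by rewrite -(mulmxA (pi (P i))) order_one !mulmxA pi_pi0.
Qed.

Definition Doff := D - Ddiag.

Lemma comm_Doff a : dpi a = comm Doff (pi a).
Proof. by rewrite commBl Ddiag_comm subr0. Qed.

Lemma compress_Doff i : pi (P i) *m Doff *m pi (P i) = 0.
Proof.
rewrite /Doff /Ddiag mulmxBr mulmxBl mulmx_sumr mulmx_suml (bigD1 i) //=.
rewrite big1 => [|j ji]; last first.
  by rewrite !mulmxA pi_P_mul eq_sym (negbTE ji) !mul0mx.
rewrite !mulmxA pi_P_mul eqxx -(mulmxA _ (pi (P i)) (pi (P i))) pi_P_mul eqxx.
by rewrite addr0 subrr.
Qed.

Lemma pi_P_idem i : pi (P i) *m pi (P i) = pi (P i).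
Proof. by rewrite pi_P_mul eqxx. Qed.

Lemma dpiM a b : dpi (amul a b) = dpi a *m pi b + pi a *m dpi b.
Proof. by rewrite fst_pi_mul /comm mulmxBl mulmxBr !mulmxA addrA subrK. Qed.

Lemma dpiN a : dpi (aopp a) = - dpi a.
Proof. by rewrite piN /comm mulmxN mulNmx opprD. Qed.

Lemma dpiZ c a : dpi (ascale c a) = c *: dpi a.
Proof. by rewrite fst_pi_scale /comm -scalemxAl -scalemxAr scalerBr. Qed.

Lemma dpi1 : dpi (aone C n) = 0.
Proof. by rewrite pi1 commx1. Qed.

Lemma sum_dpi_P : \sum_i dpi (P i) = 0.
Proof. by rewrite -comm_sumr sum_pi_P commx1. Qed.

Lemma sum_xi_pp : \sum_(q <- xi C n) pi q.1 *m pi q.2 = 0.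
Proof.
rewrite (sum_xi_mul pi pi) sum_pi_P mulmx1.
by under eq_bigr do rewrite pi_P_idem; rewrite sum_pi_P subrr.
Qed.

Lemma sum_xi_pd : \sum_(q <- xi C n) pi q.1 *m dpi q.2 = Doff.
Proof.
rewrite (sum_xi_mul pi (fun a => dpi a)) sum_dpi_P mulmx0 sub0r.
under eq_bigr => i _ do
  rewrite comm_Doff (comm_idemMr (pi_P_idem i) (compress_Doff i)).
by rewrite sumrN opprK -mulmx_suml sum_pi_P mul1mx.
Qed.

Lemma sum_xi_dp : \sum_(q <- xi C n) dpi q.1 *m pi q.2 = - Doff.
Proof.
rewrite (sum_xi_mul (fun a => dpi a) pi) sum_dpi_P mul0mx sub0r.
under eq_bigr => i _ do
  rewrite comm_Doff (comm_idemMl (pi_P_idem i) (compress_Doff i)).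
by rewrite -mulmx_sumr sum_pi_P mulmx1.
Qed.

Lemma sum_xi_dd : \sum_(q <- xi C n) dpi q.1 *m dpi q.2
  = Doff *m Doff + \sum_i pi (P i) *m (Doff *m Doff) *m pi (P i).
Proof.
rewrite (sum_xi_mul (fun a => dpi a) (fun a => dpi a)) sum_dpi_P mul0mx sub0r.
under eq_bigr => i _ do
  rewrite comm_Doff (comm_idem_sqr (pi_P_idem i) (compress_Doff i)).
rewrite sumrB sumrN opprB opprK addrC; congr (_ + _).
by rewrite -mulmx_suml -mulmx_sumr sum_pi_P mulmx1.
Qed.

Lemma piD1_cat u v : piD1 D (u ++ v) = piD1 D u + piD1 D v.
Proof. exact: big_cat. Qed.

Lemma piD2_cat u v : piD2 D (u ++ v) = piD2 D u + piD2 D v.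
Proof. exact: big_cat. Qed.

Lemma piD1_flatten (l : seq (uform1 C n)) :
  piD1 D (flatten l) = \sum_(u <- l) piD1 D u.
Proof. exact: big_flatten. Qed.

Lemma piD2_flatten (l : seq (uform2 C n)) :
  piD2 D (flatten l) = \sum_(u <- l) piD2 D u.
Proof. exact: big_flatten. Qed.

Lemma piD2_neg2 w : piD2 D (neg2 w) = - piD2 D w.
Proof.
rewrite /piD2 big_map -sumrN; apply: eq_bigr => p _.
by rewrite piN !mulNmx.
Qed.

Lemma piD2_d1 w : piD2 D (d1 w) = \sum_(p <- w) dpi p.1 *m dpi p.2.
Proof. by rewrite /piD2 big_map; apply: eq_bigr => p _; rewrite pi1 mul1mx. Qed.

Lemma piD2_d1_flatten (l : seq (uform1 C n)) :
  piD2 D (d1 (flatten l)) = \sum_(u <- l) piD2 D (d1 u).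
Proof.
by rewrite piD2_d1 big_flatten; apply: eq_bigr => u _; rewrite piD2_d1.
Qed.

Lemma piD2_mul11 u v : piD2 D (mul11 u v) = piD1 D u *m piD1 D v.
Proof.
rewrite /piD2 big_flatten /= big_allpairs_dep /piD1 mulmx_suml.
apply: eq_bigr => p _; rewrite mulmx_sumr; apply: eq_bigr => q _.
rewrite big_cons big_cons big_nil addr0 /= dpiM piN fst_pi_mul.
by rewrite mulmxDr mulmxDl !mulmxA !mulNmx addrK.
Qed.

Lemma piD2_lmul2 a w : piD2 D (lmul2 a w) = pi a *m piD2 D w.
Proof.
rewrite /piD2 big_map mulmx_sumr; apply: eq_bigr => p _.
by rewrite fst_pi_mul !mulmxA.
Qed.

Lemma piD2_rmul2 w b : piD2 D (rmul2 w b) = piD2 D w *m pi b.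
Proof.
rewrite /piD2 big_flatten /= big_map mulmx_suml; apply: eq_bigr => p _.
rewrite !big_cons big_nil addr0 /= !dpiM piN fst_pi_mul.
by rewrite [comm]lock !mulmxDr !mulmxDl !mulmxA !mulNmx subrK addrK.
Qed.

Lemma piD1_scale1 c w : piD1 D (scale1 c w) = c *: piD1 D w.
Proof.
rewrite /piD1 big_map scaler_sumr; apply: eq_bigr => p _.
by rewrite fst_pi_scale scalemxAl.
Qed.

Lemma piD2_d1_scale1 c w : piD2 D (d1 (scale1 c w)) = c *: piD2 D (d1 w).
Proof.
rewrite !piD2_d1 big_map scaler_sumr; apply: eq_bigr => p _.
by rewrite dpiZ scalemxAl.
Qed.

Lemma piD1_lmul1 a w : piD1 D (lmul1 a w) = pi a *m piD1 D w.
Proof.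
rewrite /piD1 big_map mulmx_sumr; apply: eq_bigr => q _.
by rewrite fst_pi_mul mulmxA.
Qed.

Lemma piD2_d1_lmul1 a w :
  piD2 D (d1 (lmul1 a w)) = dpi a *m piD1 D w + pi a *m piD2 D (d1 w).
Proof.
rewrite !piD2_d1 big_map /piD1 !mulmx_sumr -big_split /=.
by apply: eq_bigr => q _; rewrite dpiM mulmxDl !mulmxA.
Qed.

Lemma eqOmega2_ker (k1 : uform1 C n) u v :
  piD1 D k1 = 0 -> piD2 D u = piD2 D v + piD2 D (d1 k1) -> eqOmega2 D u v.
Proof.
move=> k10 uv; exists k1; split => //.
by rewrite piD2_cat piD2_neg2 piD2_cat -uv subrr.
Qed.

Lemma eqOmega2_pi u v : piD2 D u = piD2 D v -> eqOmega2 D u v.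
Proof.
move=> uv; apply: (@eqOmega2_ker [::]); first exact: big_nil.
by rewrite uv [piD2 D (d1 _)]big_nil addr0.
Qed.

Lemma pi_xi : piD1 D (xi C n) = Doff.
Proof. exact: sum_xi_pd. Qed.

Lemma piD1_xi_bracket a : piD1 D (xi_bracket a) = 0.
Proof.
rewrite !piD1_cat piD1_lmul1 pi_xi /piD1 big_map big_cons big_nil addr0 /=.
under eq_bigr => q _ do rewrite dpiM mulmxDr !mulmxA.
rewrite big_split /= -!mulmx_suml sum_xi_pd sum_xi_pp mul0mx addr0.
by rewrite !piN pi1 !mulNmx mul1mx comm_Doff /comm opprB addKr subrr.
Qed.

Section DiagonalSquare.
Hypothesis Doff_sqr_diag :
  Doff *m Doff = \sum_i pi (P i) *m (Doff *m Doff) *m pi (P i).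

Lemma sum_xi_dd_diag :
  \sum_(q <- xi C n) dpi q.1 *m dpi q.2 = Doff *m Doff + Doff *m Doff.
Proof. by rewrite sum_xi_dd -Doff_sqr_diag. Qed.

Lemma piD2_d1_xi_bracket a :
  piD2 D (d1 (xi_bracket a)) = comm (Doff *m Doff) (pi a).
Proof.
rewrite piD2_d1 /xi_bracket /lmul1 [xi C n]lock !big_cat /= !big_map.
rewrite big_cons big_nil addr0 /= -lock.
under eq_bigr => q _ do rewrite dpiM mulmxDr !mulmxA.
rewrite big_split /= -!mulmx_suml sum_xi_dd_diag sum_xi_dp.
under eq_bigr => q _ do rewrite dpiM mulmxDl -!mulmxA.
rewrite big_split /= -!mulmx_sumr sum_xi_pd sum_xi_dd_diag !dpiN piN dpi1 oppr0.
rewrite mul0mx addr0.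
by rewrite (comm_Doff a) comm_sqr_twice.
Qed.

Lemma blockdiag_xi_sqr : eqOmega2 D
  (flatten [seq rmul2 (lmul2 (P i) (mul11 (xi C n) (xi C n))) (P i)
           | i <- enum 'I_k])
  (mul11 (xi C n) (xi C n)).
Proof.
apply: eqOmega2_pi; rewrite piD2_flatten big_map big_enum /=.
under eq_bigr do rewrite piD2_rmul2 piD2_lmul2 piD2_mul11 pi_xi.
by rewrite piD2_mul11 pi_xi -Doff_sqr_diag.
Qed.

Lemma d1_xi :
  eqOmega2 D (d1 (xi C n)) (mul11 (xi C n) (xi C n) ++ mul11 (xi C n) (xi C n)).
Proof.
by apply: eqOmega2_pi; rewrite piD2_d1 sum_xi_dd_diag piD2_cat piD2_mul11 pi_xi.
Qed.

Lemma d1_graded_comm_xi w :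
  eqOmega2 D (d1 w) (mul11 (xi C n) w ++ mul11 w (xi C n)).
Proof.
apply: (@eqOmega2_ker (flatten [seq lmul1 (aopp p.1) (xi_bracket p.2) | p <- w])).
  rewrite piD1_flatten big_map; apply: big1 => p _.
  by rewrite piD1_lmul1 piD1_xi_bracket mulmx0.
rewrite piD2_cat !piD2_mul11 pi_xi piD2_d1_flatten big_map piD2_d1.
rewrite /piD1 mulmx_sumr mulmx_suml -!big_split; apply: eq_bigr => p _ /=.
rewrite piD2_d1_lmul1 piD1_xi_bracket piD2_d1_xi_bracket mulmx0 add0r piN mulNmx.
by rewrite !comm_Doff comm_mulr_comm.
Qed.

Lemma curvature_m2xi : eqOmega2 D (curvature (scale1 (-2) (xi C n))) [::].
Proof.
apply: eqOmega2_pi; rewrite /curvature piD2_cat piD2_d1_scale1 piD2_mul11.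
rewrite piD1_scale1 piD2_d1 sum_xi_dd_diag pi_xi [piD2 D [::]]big_nil.
rewrite -scalemxAl -scalemxAr scalerA mulrNN -scalerA -mulr2n scaleNr.
by rewrite !scaler_nat addNr.
Qed.

End DiagonalSquare.

End Dirac.

Theorem lemma10 (C : numClosedFieldType) (k : nat) (n : 'I_k -> nat)
  (hn : forall i, (0 < n i)%N)
  (S : fin_spectral_triple C n) (D : 'M[C]_(fst_N S))
  (hD : @is_dirac C k n S D) :
  let xi := xi C n in
  let P := @Pblk C k n in
  let xih := @piD1 C k n S D xi in
  xih *m xih = \sum_(i < k) fst_pi S (P i) *m (xih *m xih) *m fst_pi S (P i) ->
  [/\ @eqOmega2 C k n S D
        (flatten [seq rmul2 (lmul2 (P i) (mul11 xi xi)) (P i) | i <- enum 'I_k])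
        (mul11 xi xi),
      @eqOmega2 C k n S D (d1 xi) (mul11 xi xi ++ mul11 xi xi),
      (forall w : uform1 C n,
         @eqOmega2 C k n S D (d1 w) (mul11 xi w ++ mul11 w xi)) &
      @eqOmega2 C k n S D (curvature (scale1 (-2) xi)) [::]].
Proof.
move=> xi P xih; rewrite /xih (pi_xi hn hD) => flat.
split; [exact: (blockdiag_xi_sqr hn hD flat) | exact: (d1_xi hn hD flat)
       | exact: (d1_graded_comm_xi hn hD flat)
       | exact: (curvature_m2xi hn hD flat)].
Qed.
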